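(* Let $G=(V,E)$ be a finite simple graph of order $n$ and let $(x,z)$ be an optimal solution of the Fort Number Model $\mathrm{FN}(G)$. Then $\mathrm{ft}(G)=\sum_{i=1}^n z_i$.
   Context: $N(u)$ denotes the neighborhood of $u$. A fort of $G$ is a non-empty set $F\subseteq V$ such that no vertex $u\in V\setminus F$ has exactly one neighbor in $F$. The fort number $\mathrm{ft}(G)$ is the maximum cardinality of a collection of pairwise disjoint forts of $G$. The Fort Number Model $\mathrm{FN}(G)$ has binary variables $x_{iv}$ ($i\in\{1,\dots,n\}$, $v\in V$) and $z_i$ ($i\in\{1,\dots,n\}$), with constraints: $z_i-\sum_{u\in V}x_{iu}\leq0$ for all $i$; $x_{iu}-x_{iv}+\sum_{w\in N(u)\setminus\{v\}}x_{iw}\geq0$ for all $i$, all $v\in V$ and all $u\in N(v)$; $\sum_{i=1}^n x_{iu}\leq1$ for all $u\in V$; its objective is to maximize $\sum_{i=1}^n z_i$. *)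

From mathcomp Require Import all_boot all_order.
Set Implicit Arguments. Unset Strict Implicit. Unset Printing Implicit Defensive.

Definition simple_graph (T : finType) (e : rel T) : Prop :=
  symmetric e /\ irreflexive e.

Definition nbhd (T : finType) (e : rel T) (u : T) : {set T} := [set w | e u w].

Definition fort (T : finType) (e : rel T) (F : {set T}) : bool :=
  (F != set0) && [forall u, (u \notin F) ==> (#|nbhd e u :&: F| != 1)].

Definition disjoint_forts (T : finType) (e : rel T) (P : {set {set T}}) : bool :=
  [forall F in P, fort e F] && trivIset P.

Definition fort_number (T : finType) (e : rel T) : nat :=
  \max_(P : {set {set T}} | disjoint_forts e P) #|P|.

(* Feasibility for the Fort Number Model FN(G), with n = #|T|;
   binary variables x_{iv} and z_i are booleans (coerced to 0/1 in nat). *)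
Definition FN_feasible (T : finType) (e : rel T)
    (x : 'I_#|T| -> T -> bool) (z : 'I_#|T| -> bool) : Prop :=
  (forall i : 'I_#|T|, (z i <= \sum_(u : T) x i u)%N) /\
  (forall (i : 'I_#|T|) (v u : T), e v u ->
      (x i v <= x i u + \sum_(w : T | e u w && (w != v)) x i w)%N) /\
  (forall u : T, (\sum_(i < #|T|) x i u <= 1)%N).

Definition FN_objective (T : finType) (z : 'I_#|T| -> bool) : nat :=
  \sum_(i < #|T|) z i.

Definition FN_optimal (T : finType) (e : rel T)
    (x : 'I_#|T| -> T -> bool) (z : 'I_#|T| -> bool) : Prop :=
  FN_feasible e x z /\
  (forall x' z', FN_feasible e x' z' -> (FN_objective z' <= FN_objective z)%N).

From mathcomp Require Import all_boot all_order.
From mathcomp Require Import zify.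

(* Read each row x_i of an FN solution as its support {v | x_iv = 1}. For an edge (v, u) the
   constraint says that if v is in the support and u is not, then u has a second neighbour in it;
   over all edges (G being symmetric) this is exactly the fort condition. The constraint
   sum_i x_iu <= 1 makes the supports pairwise disjoint and z_i = 1 makes the i-th one nonempty,
   so the supports with z_i = 1 are sum_i z_i disjoint forts. Conversely, disjoint nonempty forts
   number at most n, so any family of them fills the rows of a feasible solution whose objective
   is its size. *)

Lemma sum_nat_bool_card (I : finType) (P b : pred I) :
  \sum_(i | P i) (b i : nat) = #|[set i | P i && b i]|.
Proof. by rewrite -sum1dep_card big_mkcondr; apply: eq_bigr => i _; case: (b i). Qed.

Lemma sum_bool_le1P (I : finType) (b : pred I) :
  reflect (forall i j, b i -> b j -> i = j) (\sum_i (b i : nat) <= 1).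
Proof.
rewrite sum_nat_bool_card; apply: (iffP card_le1_eqP) => eq_b i j.
  by move=> bi bj; apply/esym/eq_b; rewrite inE.
by rewrite !inE => bi bj; apply/esym/eq_b.
Qed.

Lemma sum_ord_lt n k : \sum_(i < n) (i < k : nat) = minn k n.
Proof.
elim: n => [|n IHn]; first by rewrite big_ord0; lia.
by rewrite big_ord_recr /= IHn; case: ltnP => /=; lia.
Qed.

Lemma card_trivIset_le (T : finType) (P : {set {set T}}) :
  trivIset P -> set0 \notin P -> #|P| <= #|T|.
Proof.
move=> /eqP cover_P P_ne0; rewrite -sum1_card.
apply: leq_trans (max_card (cover P)); rewrite -cover_P; apply: leq_sum => A PA.
by rewrite card_gt0; apply: contraNneq P_ne0 => <-.
Qed.

Section FortNumberModel.

Context {T : finType} {e : rel T}.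
Hypothesis e_sym : symmetric e.

Lemma sum_nbhd_setD1 {b : pred T} {u v : T} : e u v -> b v ->
  \sum_(w | e u w && (w != v)) (b w : nat) = #|nbhd e u :&: [set w | b w]|.-1.
Proof.
move=> euv bv; rewrite sum_nat_bool_card [in RHS](cardsD1 v) !inE euv bv /=.
by rewrite add0n; apply: eq_card => w; rewrite !inE [e u w && _]andbC andbA.
Qed.

Lemma fort_constraintP (b : pred T) :
  reflect (forall v u, e v u -> b v <= b u + \sum_(w | e u w && (w != v)) (b w : nat))
          [forall u, (u \notin [set w | b w]) ==> (#|nbhd e u :&: [set w | b w]| != 1)].
Proof.
apply: (iffP forallP) => [lone_b v u evu | constraint_b u].
  rewrite e_sym in evu; case bv: (b v) => //; case bu: (b u) => //=.
  have := lone_b u; rewrite inE bu /= (sum_nbhd_setD1 evu bv).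
  suff: 0 < #|nbhd e u :&: [set w | b w]| by case: #|_| => [|[|k]].
  by apply/card_gt0P; exists v; rewrite !inE evu.
rewrite inE; apply/implyP => bu; apply/negP => /cards1P [v nbhd_u].
have /setIP [] : v \in nbhd e u :&: [set w | b w] by rewrite nbhd_u set11.
rewrite !inE => euv bv; have := constraint_b v u; rewrite e_sym euv (negbTE bu) bv.
by rewrite (sum_nbhd_setD1 euv bv) nbhd_u cards1 => /(_ isT).
Qed.

Definition FN_forts (x : 'I_#|T| -> T -> bool) (z : 'I_#|T| -> bool) : {set {set T}} :=
  [set [set v | x i v] | i in [set i | z i]].

Section FeasibleSolution.

Context {x : 'I_#|T| -> T -> bool} {z : 'I_#|T| -> bool}.
Hypothesis feasible_xz : FN_feasible e x z.

Lemma FN_rows_disjoint {i j v} : x i v -> x j v -> i = j.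
Proof. by case: feasible_xz => _ [_ /(_ v) /sum_bool_le1P]; apply. Qed.

Lemma FN_row_neq0 {i} : z i -> [set v | x i v] != set0.
Proof.
case: feasible_xz => /(_ i) + _ zi; rewrite zi sum_nat_bool_card card_gt0.
by congr (_ != _); apply/setP => v; rewrite !inE.
Qed.

Lemma FN_row_fort {i} : z i -> fort e [set v | x i v].
Proof.
move=> zi; rewrite /fort FN_row_neq0 //=; apply/fort_constraintP.
by case: feasible_xz => _ [constraint _]; apply: constraint.
Qed.

Lemma FN_forts_disjoint : disjoint_forts e (FN_forts x z).
Proof.
apply/andP; split.
  by apply/forall_inP => A /imsetP [i]; rewrite inE => zi ->; apply: FN_row_fort.
apply/trivIsetP => A B /imsetP [i _ ->] /imsetP [j _ ->] neq_rows.
apply/pred0P => v /=; apply/negP; rewrite !inE => /andP [xiv xjv].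
by move: neq_rows; rewrite (FN_rows_disjoint xiv xjv) eqxx.
Qed.

Lemma card_FN_forts : #|FN_forts x z| = FN_objective z.
Proof.
rewrite /FN_objective sum_nat_bool_card card_in_imset.
  by apply: eq_card => i; rewrite !inE.
move=> i j; rewrite !inE => zi _ /setP eq_rows.
have /set0Pn [v] := FN_row_neq0 zi; rewrite inE => xiv.
by apply: (FN_rows_disjoint xiv); have := eq_rows v; rewrite !inE xiv.
Qed.

Lemma FN_objective_le_fort_number : FN_objective z <= fort_number e.
Proof. by rewrite -card_FN_forts; apply: leq_bigmax_cond FN_forts_disjoint. Qed.

End FeasibleSolution.

Definition fort_row (P : {set {set T}}) (i : nat) : {set T} := nth set0 (enum P) i.

Definition FN_x_of_forts (P : {set {set T}}) (i : 'I_#|T|) (v : T) : bool :=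
  v \in fort_row P i.

Definition FN_z_of_forts (P : {set {set T}}) (i : 'I_#|T|) : bool := i < #|P|.

Lemma fort_row_in {P : {set {set T}}} {i : nat} : i < #|P| -> fort_row P i \in P.
Proof. by rewrite cardE -mem_enum => /(mem_nth set0). Qed.

Lemma fort_row_default {P : {set {set T}}} {i : nat} : #|P| <= i -> fort_row P i = set0.
Proof. by rewrite cardE => /(nth_default set0). Qed.

Lemma fort_row_lt {P : {set {set T}}} {i : nat} {v : T} : v \in fort_row P i -> i < #|P|.
Proof. by rewrite ltnNge; apply: contraTN => /fort_row_default ->; rewrite inE. Qed.

Lemma fort_row_inj {P : {set {set T}}} {i j : nat} :
  i < #|P| -> j < #|P| -> fort_row P i = fort_row P j -> i = j.
Proof. by move=> lt_i lt_j /eqP; rewrite nth_uniq ?enum_uniq -?cardE // => /eqP. Qed.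

Section DisjointForts.

Context {P : {set {set T}}}.
Hypothesis forts_P : disjoint_forts e P.

Lemma disjoint_forts_fort A : A \in P -> fort e A.
Proof. by case/andP: forts_P => /forall_inP all_forts _; apply: all_forts. Qed.

Lemma card_disjoint_forts_le : #|P| <= #|T|.
Proof.
case/andP: forts_P => _ /card_trivIset_le; apply.
by apply/negP => /disjoint_forts_fort /andP [/eqP].
Qed.

Lemma FN_of_forts_feasible : FN_feasible e (FN_x_of_forts P) (FN_z_of_forts P).
Proof.
split; [|split].
- move=> i; rewrite /FN_z_of_forts; case: ltnP => //= /fort_row_in /disjoint_forts_fort.
  case/andP=> /set0Pn [v row_v] _; rewrite sum_nat_bool_card.
  by apply/card_gt0P; exists v; rewrite inE.
- move=> i; apply/fort_constraintP.
  have -> : [set v | FN_x_of_forts P i v] = fort_row P i by apply/setP => v; rewrite inE.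
  have [/fort_row_in /disjoint_forts_fort /andP [] //|/fort_row_default ->] := ltnP i #|P|.
  by apply/forallP => u; rewrite setI0 cards0 implybT.
- move=> u; apply/sum_bool_le1P => i j; rewrite /FN_x_of_forts => ui uj.
  have [lt_i lt_j] := (fort_row_lt ui, fort_row_lt uj).
  apply: val_inj; apply: (fort_row_inj lt_i lt_j); apply/eqP; apply: contraT => neq_rows.
  case/andP: forts_P => _ /trivIsetP /(_ _ _ (fort_row_in lt_i) (fort_row_in lt_j) neq_rows).
  by move/pred0P/(_ u); rewrite /= ui uj.
Qed.

Lemma FN_of_forts_objective : FN_objective (FN_z_of_forts P) = #|P|.
Proof. by rewrite /FN_objective sum_ord_lt; apply/minn_idPl/card_disjoint_forts_le. Qed.

End DisjointForts.

End FortNumberModel.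

Theorem corollary7p3 (T : finType) (e : rel T) (He : simple_graph e)
    (x : 'I_#|T| -> T -> bool) (z : 'I_#|T| -> bool) :
  FN_optimal e x z -> fort_number e = \sum_(i < #|T|) z i.
Proof.
case: He => e_sym _ [feasible_xz optimal_xz].
apply/eqP; rewrite eqn_leq (FN_objective_le_fort_number e_sym feasible_xz) andbT.
apply/bigmax_leqP => P forts_P; rewrite -(FN_of_forts_objective forts_P).
exact/optimal_xz/(FN_of_forts_feasible e_sym forts_P).
Qed.
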